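(* If a selection $\mathtt{SEL}$ of the consistent set map is $(\gamma,T)$-weakly competitive, then it is $(k\gamma,kT)$-weakly competitive for every $k\in\mathbb{N}$.
   Context: $(\mathbb{T},\mathsf{K},d)$ is a compact parametrization of a set $\mathcal{F}$ of functions $\mathbb{N}\times\mathcal{X}\times\mathcal{U}\to\mathcal{X}$. For a finite data set $\mathcal{D}$ of points $(t,x^+,x,u)$, $\mathsf{P}(\mathcal{D})$ is the closure of $\{\theta\in\mathsf{K}:\exists f\in\mathbb{T}[\theta],\ x^+=f(t,x,u)\ \forall(t,x^+,x,u)\in\mathcal{D}\}$; $\mathtt{SEL}$ is a selection if $\mathtt{SEL}[\mathcal{D}]\in\mathsf{P}(\mathcal{D})$. $\mathtt{SEL}$ is $(\gamma,T)$-weakly competitive if for every data stream $\mathcal{D}_t=(d_1,\dots,d_t)$ with some $f\in\mathcal{F}$ consistent with all $\mathcal{D}_t$, $\theta_t=\mathtt{SEL}[\mathcal{D}_t]$ satisfies $\sum_{t=t_1+1}^{t_2}d(\theta_t,\theta_{t-1})\le\gamma d_H(\mathsf{P}(\mathcal{D}_{t_2}),\mathsf{P}(\mathcal{D}_{t_1}))$ whenever $t_2-t_1\le T$; $d_H$ is the Hausdorff distance. *)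

From mathcomp Require Import all_boot all_order all_algebra.
From mathcomp Require Import all_classical all_reals ereal.
Set Implicit Arguments. Unset Strict Implicit. Unset Printing Implicit Defensive.
Import Order.TTheory GRing.Theory Num.Theory.
Local Open Scope classical_set_scope.
Local Open Scope ring_scope.

(* A data point (t, x^+, x, u). *)
Definition datum (X U : Type) := (nat * X * X * U)%type.

Section Defs.
Variables (R : realType) (X U Theta : Type).
Variables (K : set Theta) (d : Theta -> Theta -> R)
          (Tm : Theta -> set (nat -> X -> U -> X)).

Definition is_metric_on : Prop :=
  [/\ forall x y, K x -> K y -> 0 <= d x y,
      forall x y, K x -> K y -> (d x y = 0 <-> x = y),
      forall x y, K x -> K y -> d x y = d y x &
      forall x y z, K x -> K y -> K z -> d x z <= d x y + d y z].

Definition metric_compact : Prop :=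
  forall u : nat -> Theta, (forall n, K (u n)) ->
  exists (phi : nat -> nat) (l : Theta),
    [/\ K l, (forall n m, (n < m)%N -> (phi n < phi m)%N) &
        forall e, 0 < e -> exists N, forall n, (N <= n)%N -> d (u (phi n)) l < e].

Definition compact_parametrization (F : set (nat -> X -> U -> X)) : Prop :=
  [/\ is_metric_on, metric_compact & F = \bigcup_(th in K) Tm th].

Definition consistent (f : nat -> X -> U -> X) (D : set (datum X U)) : Prop :=
  forall t xp x u, D (t, xp, x, u) -> xp = f t x u.

Definition closure_in (S : set Theta) : set Theta :=
  [set th | K th /\ forall e, 0 < e -> exists th', S th' /\ d th th' < e].

Definition Pset (D : set (datum X U)) : set Theta :=
  closure_in [set th | K th /\ exists f, Tm th f /\ consistent f D].

Definition is_selection (SEL : set (datum X U) -> Theta) : Prop :=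
  forall D, finite_set D -> Pset D !=set0 -> Pset D (SEL D).

Definition edist_set (x : Theta) (B : set Theta) : \bar R :=
  ereal_inf [set (d x b)%:E | b in B].
Definition hausdorff (A B : set Theta) : \bar R :=
  Order.max (ereal_sup [set edist_set a B | a in A])
            (ereal_sup [set edist_set b A | b in B]).

(* D_t = {d_1, ..., d_t}, where the stream is w with d_(i+1) = w i *)
Definition prefix (w : nat -> datum X U) (t : nat) : set (datum X U) :=
  [set w i | i in [set i | (i < t)%N]].

Definition weakly_competitive (F : set (nat -> X -> U -> X)) (gamma : R)
    (T : nat) (SEL : set (datum X U) -> Theta) : Prop :=
  forall w : nat -> datum X U,
    (exists f, F f /\ forall t, consistent f (prefix w t)) ->
    forall t1 t2 : nat, (t1 <= t2)%N -> (t2 - t1 <= T)%N ->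
    ((\sum_(t1.+1 <= t < t2.+1)
        d (SEL (prefix w t)) (SEL (prefix w t.-1)))%:E
     <= gamma%:E * hausdorff (Pset (prefix w t2)) (Pset (prefix w t1)))%E.

End Defs.

(** Weak competitiveness is additive: from (g1, T1) and (g2, T2) one gets
(g1 + g2, T1 + T2) by splitting a window [t1, t2] at s = min(t2, t1 + T1) and
bounding the movement of the selection on [t1, s] and on [s, t2] separately.
This works because the consistent sets P_t shrink as data arrive, and for
nested sets C ⊆ B ⊆ A the Hausdorff distance reduces to sup_{a ∈ A} dist(a, B),
so both d_H(P_s, P_t1) and d_H(P_t2, P_s) are at most d_H(P_t2, P_t1). *)

From Pilot Require Import Defs.
From mathcomp Require Import all_boot all_order all_algebra.
From mathcomp Require Import all_classical all_reals ereal.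
From mathcomp Require Import zify.
Set Implicit Arguments. Unset Strict Implicit. Unset Printing Implicit Defensive.
Import Order.TTheory GRing.Theory Num.Theory.
Local Open Scope classical_set_scope.
Local Open Scope ring_scope.

Section NestedHausdorff.
Variables (R : realType) (Theta : Type) (K : set Theta) (d : Theta -> Theta -> R).
Hypothesis d_ge0 : forall x y, K x -> K y -> 0 <= d x y.
Hypothesis d_refl : forall x, K x -> d x x = 0.

Lemma edist_set_le0 x B : K x -> B x -> (edist_set d x B <= 0)%E.
Proof.
move=> Kx Bx; apply: le_trans (ereal_inf_lbound _) _; first by exists x.
by rewrite d_refl.
Qed.

Lemma edist_set_ge0 x B : K x -> B `<=` K -> (0 <= edist_set d x B)%E.
Proof.
move=> Kx BK; apply: le_ereal_inf_tmp => _ [b Bb <-].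
by rewrite lee_fin d_ge0 //; exact: BK.
Qed.

Lemma hausdorff_nested A B : B `<=` A -> A `<=` K ->
  hausdorff d B A = ereal_sup [set edist_set d a B | a in A].
Proof.
move=> BA AK; apply/max_r/ge_ereal_sup => _ [b Bb <-].
have Kb : K b by apply/AK/BA.
apply: (@le_trans _ _ 0%E); first exact/edist_set_le0/BA.
apply: le_trans (ereal_sup_ubound _); last by exists b; first exact: BA.
by apply: edist_set_ge0 => // x /BA/AK.
Qed.

Lemma le_hausdorff_shrink A B C : C `<=` B -> B `<=` A -> A `<=` K ->
  (hausdorff d B A <= hausdorff d C A)%E.
Proof.
move=> CB BA AK; rewrite !hausdorff_nested //; last exact: subset_trans BA.
apply: ge_ereal_sup => _ [a Aa <-].
apply: le_trans (ereal_sup_ubound _); last by exists a.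
exact/ereal_inf_le_tmp/image_subset.
Qed.

Lemma le_hausdorff_grow A B C : C `<=` B -> B `<=` A -> A `<=` K ->
  (hausdorff d C B <= hausdorff d C A)%E.
Proof.
move=> CB BA AK; rewrite !hausdorff_nested //; last 2 first.
- exact: subset_trans BA.
- exact: subset_trans AK.
exact/ereal_sup_le/image_subset.
Qed.

End NestedHausdorff.

Lemma prefix_le (X U : Type) (w : nat -> datum X U) s t :
  (s <= t)%N -> Defs.prefix w s `<=` Defs.prefix w t.
Proof. by move=> st _ [i ilt <-]; exists i => //; exact: leq_trans st. Qed.

Section ConsistentSets.
Variables (R : realType) (X U Theta : Type).
Variables (K : set Theta) (d : Theta -> Theta -> R)
          (Tm : Theta -> set (nat -> X -> U -> X)).

Lemma consistent_sub f (D D' : set (datum X U)) :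
  D `<=` D' -> consistent f D' -> consistent f D.
Proof. by move=> DD' cf t xp x u /DD'; exact: cf. Qed.

Lemma closure_in_sub (S S' : set Theta) :
  S `<=` S' -> closure_in K d S `<=` closure_in K d S'.
Proof.
move=> SS' th [Kth clS]; split=> // e e0.
by have [th' [/SS' ? ?]] := clS e e0; exists th'.
Qed.

Lemma Pset_sub D : Pset K d Tm D `<=` K.
Proof. by move=> th []. Qed.

Lemma Pset_anti (D D' : set (datum X U)) :
  D `<=` D' -> Pset K d Tm D' `<=` Pset K d Tm D.
Proof.
move=> DD'; apply: closure_in_sub => th [Kth [f [Tf cf]]].
by split=> //; exists f; split=> //; exact: consistent_sub cf.
Qed.

Variables (F : set (nat -> X -> U -> X)) (SEL : set (datum X U) -> Theta).

Lemma weakly_competitive00 : weakly_competitive K d Tm F 0 0 SEL.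
Proof.
move=> w _ t1 t2 t12; rewrite leqn0 subn_eq0 => t21.
have -> : t2 = t1 by apply/eqP; rewrite eqn_leq t21 t12.
by rewrite big_geq // mul0e.
Qed.

Hypothesis d_ge0 : forall x y, K x -> K y -> 0 <= d x y.
Hypothesis d_refl : forall x, K x -> d x x = 0.

Lemma weakly_competitiveD g1 g2 T1 T2 : 0 <= g1 -> 0 <= g2 ->
  weakly_competitive K d Tm F g1 T1 SEL ->
  weakly_competitive K d Tm F g2 T2 SEL ->
  weakly_competitive K d Tm F (g1 + g2) (T1 + T2) SEL.
Proof.
move=> g1_ge0 g2_ge0 wc1 wc2 w cons_w t1 t2 t12 t21.
pose P t := Pset K d Tm (Defs.prefix w t).
have P_anti s t : (s <= t)%N -> P t `<=` P s.
  by move=> st; apply/Pset_anti/prefix_le.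
pose s := minn t2 (t1 + T1).
have t1s : (t1 <= s)%N by rewrite leq_min t12 leq_addr.
have st2 : (s <= t2)%N by rewrite geq_minl.
have P_sub t : P t `<=` K by exact: Pset_sub.
have H_s_t1 :=
  le_hausdorff_shrink d_ge0 d_refl (P_anti _ _ st2) (P_anti _ _ t1s) (P_sub t1).
have H_t2_s :=
  le_hausdorff_grow d_ge0 d_refl (P_anti _ _ st2) (P_anti _ _ t1s) (P_sub t1).
rewrite (@big_cat_nat _ _ _ s.+1) //= !EFinD ge0_muleDl ?lee_fin //.
apply: leeD.
- apply: le_trans (wc1 w cons_w t1 s t1s _) _; first by rewrite /s; lia.
  by apply: lee_wpmul2l; rewrite ?lee_fin.
- apply: le_trans (wc2 w cons_w s t2 st2 _) _; first by rewrite /s; lia.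
  by apply: lee_wpmul2l; rewrite ?lee_fin.
Qed.

End ConsistentSets.

Theorem corollary4 (R : realType) (X U Theta : Type)
    (K : set Theta) (d : Theta -> Theta -> R)
    (Tm : Theta -> set (nat -> X -> U -> X))
    (F : set (nat -> X -> U -> X))
    (SEL : set (datum X U) -> Theta) (gamma : R) (T : nat) :
  compact_parametrization K d Tm F ->
  is_selection K d Tm SEL ->
  0 <= gamma ->
  weakly_competitive K d Tm F gamma T SEL ->
  forall k : nat, weakly_competitive K d Tm F (k%:R * gamma) (k * T) SEL.
Proof.
move=> [[d_ge0 d_eq0 _ _] _ _] _ gamma_ge0 wc; elim=> [|k IHk].
  by rewrite mul0r; exact: weakly_competitive00.
have d_refl x : K x -> d x x = 0 by move=> Kx; apply/d_eq0.
rewrite mulSnr -natr1 mulrDl mul1r.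
by apply: weakly_competitiveD => //; rewrite mulr_ge0.
Qed.
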